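(* Let $J$ be a $\times d$-invariant set. For $x\in\mathbb{R}$ let $J_x=\{t-x:t\in J\}$. If $x\in\mathbb{R}$ is such that $\mathbb{Q}\cap J_x\neq\emptyset$, then $\mathbb{Q}\cap J_x$ is dense in $J_x$, and there exists $K<\infty$ such that every point $y\in J_x$ is intrinsically approximable (relative to $J_x$) with respect to the constant function $\psi(q)=K$.
   Context: Fix an integer $d\ge2$ and $E\subseteq\{0,\dots,d-1\}$ with $1<\#E<d$. The $\times d$-invariant set is $J=\{x\in[0,1]: x=\sum_{i\ge1}a_id^{-i}\text{ with all }a_i\in E\}$. For $S\subseteq\mathbb{R}$ and $\psi:\mathbb{N}\to(0,\infty)$, a point $y\in S$ is intrinsically approximable with respect to $\psi$ if there are infinitely many rationals $p/q\in\mathbb{Q}\cap S$ (lowest terms, $q\ge1$) with $|y-p/q|\le\psi(q)/q$. *)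

From Stdlib Require Import Reals Lra Lia ZArith List.
Open Scope R_scope.

(* x = sum_{i>=1} a_i d^{-i}  (the series indexed from i = 1) *)
Definition base_d_expansion (d : nat) (a : nat -> nat) (x : R) : Prop :=
  infinite_sum (fun i => INR (a (S i)) / INR d ^ (S i)) x.

Definition Jset (d : nat) (E : list nat) (x : R) : Prop :=
  0 <= x <= 1 /\
  exists a : nat -> nat,
    (forall i, (1 <= i)%nat -> In (a i) E) /\ base_d_expansion d a x.

Definition Jshift (d : nat) (E : list nat) (x : R) (s : R) : Prop :=
  exists t, Jset d E t /\ s = t - x.

Definition is_rational (r : R) : Prop :=
  exists (p : Z) (q : nat), (1 <= q)%nat /\ r = IZR p / INR q.

Definition rationals_dense_in (S : R -> Prop) : Prop :=
  forall y, S y -> forall eps, 0 < eps ->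
    exists r, is_rational r /\ S r /\ Rabs (y - r) < eps.

(* y in S is intrinsically approximable w.r.t. psi: infinitely many rationals
   p/q in S (lowest terms, q >= 1) with |y - p/q| <= psi(q)/q.
   "Infinitely many" = not contained in any finite list. *)
Definition intrinsically_approximable (S : R -> Prop) (psi : nat -> R) (y : R)
  : Prop :=
  S y /\
  forall l : list R,
    exists (p : Z) (q : nat),
      (1 <= q)%nat /\ Z.gcd p (Z.of_nat q) = 1%Z /\
      S (IZR p / INR q) /\ ~ In (IZR p / INR q) l /\
      Rabs (y - IZR p / INR q) <= psi q / INR q.

From Stdlib Require Import Reals ZArith List Lra Lia.
Open Scope R_scope.

(* Fix a point t0 of J with t0 - x = p0/q0 rational, and let b be
   a digit sequence of t0.  Given any t in J with digits a and a level n, keep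
   the first n digits of t, put an arbitrary digit e of E in position n+1, and
   continue with the digits of t0.  The resulting point u lies in J and within
   d^-n of t; moreover u - t0 is an integer multiple of d^-(n+1), so u - x is a
   rational with denominator at most q0 d^(n+1), whence |(t-x) - (u-x)| <= d^-n
   <= d q0 / q.  Since E has two distinct digits, this yields two distinct such
   rationals at every level, so one of them avoids any prescribed point.  Density
   and intrinsic approximability with the constant K = d q0 follow by letting n
   grow (and, for approximability, by avoiding a finite list of rationals). *)

Lemma limit_between (u : nat -> R) (l lo hi : R) (N : nat) :
  Un_cv u l -> (forall k, (N <= k)%nat -> lo <= u k <= hi) -> lo <= l <= hi.
Proof.
  intros hcv hbnd. split.
  - destruct (Rle_or_lt lo l) as [h|h]; [exact h|].
    destruct (hcv (lo - l)) as [N0 hN0]; [lra|].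
    specialize (hN0 (max N0 N) (Nat.le_max_l _ _)).
    specialize (hbnd (max N0 N) (Nat.le_max_r _ _)).
    unfold R_dist in hN0. apply Rabs_def2 in hN0. lra.
  - destruct (Rle_or_lt l hi) as [h|h]; [exact h|].
    destruct (hcv (l - hi)) as [N0 hN0]; [lra|].
    specialize (hN0 (max N0 N) (Nat.le_max_l _ _)).
    specialize (hbnd (max N0 N) (Nat.le_max_r _ _)).
    unfold R_dist in hN0. apply Rabs_def2 in hN0. lra.
Qed.

Lemma finite_list_gap (l : list R) (y : R) :
  exists del, 0 < del /\ forall w, In w l -> w <> y -> del <= Rabs (y - w).
Proof.
  induction l as [|w0 l [del [hdel hl]]].
  - exists 1. split; [lra | intros w []].
  - destruct (Req_dec w0 y) as [->|hne].
    + exists del. split; [exact hdel|]. intros w [<-|hw] hwy; [contradiction | auto].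
    + exists (Rmin del (Rabs (y - w0))). split.
      * apply Rmin_pos; [exact hdel | apply Rabs_pos_lt; lra].
      * intros w [<-|hw] hwy; [apply Rmin_r|].
        eapply Rle_trans; [apply Rmin_l | auto].
Qed.

Lemma reduce_fraction (A : Z) (B : nat) : (1 <= B)%nat -> exists p q,
  (1 <= q)%nat /\ (q <= B)%nat /\ Z.gcd p (Z.of_nat q) = 1%Z /\
  IZR A / INR B = IZR p / INR q.
Proof.
  intro hB. set (g := Z.gcd A (Z.of_nat B)).
  assert (hg : (0 < g)%Z).
  { assert (0 <= g)%Z by apply Z.gcd_nonneg.
    assert (g <> 0%Z) by (intro h0; apply Z.gcd_eq_0_r in h0; lia). lia. }
  destruct (Z.gcd_divide_l A (Z.of_nat B)) as [p hp].
  destruct (Z.gcd_divide_r A (Z.of_nat B)) as [qz hq]. fold g in hp, hq.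
  assert (hqz : (1 <= qz <= Z.of_nat B)%Z) by nia.
  exists p, (Z.to_nat qz). repeat split; try lia.
  - rewrite Z2Nat.id by lia.
    pose proof (Z.gcd_div_gcd A (Z.of_nat B) g ltac:(lia) eq_refl) as hgcd.
    rewrite hp, hq, !Z.div_mul in hgcd by lia. exact hgcd.
  - rewrite (INR_IZR_INZ (Z.to_nat qz)), Z2Nat.id by lia.
    rewrite INR_IZR_INZ, hq, hp, !mult_IZR.
    assert (IZR g <> 0) by (apply not_0_IZR; lia).
    assert (IZR qz <> 0) by (apply not_0_IZR; lia).
    field. auto.
Qed.

Lemma two_distinct_members (E : list nat) :
  NoDup E -> (1 < length E)%nat -> exists e1 e2, In e1 E /\ In e2 E /\ e1 <> e2.
Proof.
  intros hnd hlen. destruct E as [|e1 [|e2 E']]; simpl in hlen; try lia.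
  exists e1, e2. repeat split; simpl; auto.
  intros ->. inversion hnd as [|? ? hnin]. apply hnin. simpl. auto.
Qed.

Section DigitExpansions.

Variable d : nat.
Hypothesis hd : (2 <= d)%nat.

Lemma base_ge_2 : 2 <= INR d.
Proof. apply le_INR in hd. simpl in hd. lra. Qed.

Lemma base_pow_pos (n : nat) : 0 < INR d ^ n.
Proof. apply pow_lt. pose proof base_ge_2. lra. Qed.

Lemma base_pow_inv_small (eps : R) : 0 < eps -> exists n, / INR d ^ n < eps.
Proof.
  intro heps. pose proof base_ge_2.
  destruct (pow_lt_1_zero (/ INR d)) with (y := eps) as [N hN]; [|exact heps|].
  { rewrite Rabs_pos_eq by (left; apply Rinv_0_lt_compat; lra).
    apply (Rmult_lt_reg_l (INR d)); [lra|]. rewrite Rinv_r; lra. }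
  exists N. specialize (hN N (le_n N)).
  rewrite pow_inv, Rabs_pos_eq in hN; [exact hN|].
  left. apply Rinv_0_lt_compat, base_pow_pos.
Qed.

Fixpoint digit_sum (a : nat -> nat) (n : nat) : R :=
  match n with
  | O => 0
  | S m => digit_sum a m + INR (a (S m)) / INR d ^ S m
  end.

Fixpoint digit_num (a : nat -> nat) (n : nat) : nat :=
  match n with
  | O => O
  | S m => (digit_num a m * d + a (S m))%nat
  end.

Lemma partial_sum_digit_sum (a : nat -> nat) (N : nat) :
  sum_f_R0 (fun i => INR (a (S i)) / INR d ^ S i) N = digit_sum a (S N).
Proof.
  induction N as [|N IH]; [simpl; ring|].
  change (sum_f_R0 (fun i => INR (a (S i)) / INR d ^ S i) N
          + INR (a (S (S N))) / INR d ^ S (S N) = digit_sum a (S (S N))).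
  rewrite IH. reflexivity.
Qed.

Lemma digit_sum_num (a : nat -> nat) (n : nat) :
  digit_sum a n = INR (digit_num a n) / INR d ^ n.
Proof.
  pose proof base_ge_2.
  induction n as [|n IH]; simpl; [field|].
  pose proof (base_pow_pos n).
  rewrite IH, plus_INR, mult_INR. field. split; lra.
Qed.

Lemma digit_sum_window (a : nat -> nat) (n k : nat) :
  (forall i, (1 <= i)%nat -> (a i < d)%nat) ->
  digit_sum a n <= digit_sum a (n + k)
                <= digit_sum a n + / INR d ^ n - / INR d ^ (n + k).
Proof.
  intro hdig. pose proof base_ge_2.
  induction k as [|k IH]; [rewrite Nat.add_0_r; lra|].
  rewrite Nat.add_succ_r. set (m := (n + k)%nat) in *.
  change (digit_sum a (S m)) with (digit_sum a m + INR (a (S m)) / INR d ^ S m).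
  assert (hdm : INR (a (S m)) <= INR d - 1).
  { assert (hlt : (S (a (S m)) <= d)%nat) by (apply hdig; lia).
    apply le_INR in hlt. rewrite S_INR in hlt. lra. }
  pose proof (base_pow_pos m) as hpm.
  assert (hterm : 0 <= INR (a (S m)) / INR d ^ S m <= / INR d ^ m - / INR d ^ S m).
  { replace (/ INR d ^ m - / INR d ^ S m) with ((INR d - 1) / INR d ^ S m)
      by (simpl; field; lra).
    pose proof (pos_INR (a (S m))). pose proof (base_pow_pos (S m)).
    split; unfold Rdiv; [apply Rmult_le_pos | apply Rmult_le_compat_r];
      try (left; apply Rinv_0_lt_compat); lra. }
  lra.
Qed.

Lemma expansion_bracket (a : nat -> nat) (v : R) (n : nat) :
  (forall i, (1 <= i)%nat -> (a i < d)%nat) -> base_d_expansion d a v ->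
  digit_sum a n <= v <= digit_sum a n + / INR d ^ n.
Proof.
  intros hdig hv. apply (limit_between _ v _ _ n hv).
  intros k hk. rewrite partial_sum_digit_sum.
  destruct (digit_sum_window a n (S k - n) hdig) as [hlo hhi].
  replace (n + (S k - n))%nat with (S k) in * by lia.
  pose proof (base_pow_pos (S k)). split; [lra|].
  assert (0 < / INR d ^ S k) by (apply Rinv_0_lt_compat; lra). lra.
Qed.

Lemma digit_sum_shift (c b : nat -> nat) (m k : nat) :
  (forall i, (m < i)%nat -> c i = b i) ->
  digit_sum c (m + k) - digit_sum b (m + k) = digit_sum c m - digit_sum b m.
Proof.
  intro htail. induction k as [|k IH]; [rewrite Nat.add_0_r; ring|].
  rewrite Nat.add_succ_r. simpl. rewrite htail by lia. lra.
Qed.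

Lemma expansion_change_prefix (c b : nat -> nat) (t0 : R) (m : nat) :
  (forall i, (m < i)%nat -> c i = b i) -> base_d_expansion d b t0 ->
  base_d_expansion d c (t0 - digit_sum b m + digit_sum c m).
Proof.
  intros htail hb eps heps. destruct (hb eps heps) as [N0 hN0].
  exists (max N0 m). intros k hk. specialize (hN0 k ltac:(lia)).
  rewrite partial_sum_digit_sum in *.
  pose proof (digit_sum_shift c b m (S k - m) htail) as hshift.
  replace (m + (S k - m))%nat with (S k) in hshift by lia.
  unfold R_dist in *.
  replace (digit_sum c (S k) - (t0 - digit_sum b m + digit_sum c m))
    with (digit_sum b (S k) - t0) by lra.
  exact hN0.
Qed.

Lemma digit_sum_prefix (c a : nat -> nat) (n : nat) :
  (forall i, (1 <= i <= n)%nat -> c i = a i) -> digit_sum c n = digit_sum a n.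
Proof.
  intro hpre. assert (forall k, (k <= n)%nat -> digit_sum c k = digit_sum a k) as hk.
  { induction k as [|k IH]; intro hkn; [reflexivity|].
    simpl. rewrite IH, hpre by lia. reflexivity. }
  apply hk. lia.
Qed.

Definition splice (a b : nat -> nat) (n e : nat) : nat -> nat :=
  fun i => if (i <=? n)%nat then a i else if (i =? S n)%nat then e else b i.

Definition spliced_value (a b : nat -> nat) (t0 : R) (n e : nat) : R :=
  t0 - digit_sum b (S n) + digit_sum a n + INR e / INR d ^ S n.

Lemma splice_expansion (a b : nat -> nat) (t0 : R) (n e : nat) :
  base_d_expansion d b t0 ->
  base_d_expansion d (splice a b n e) (spliced_value a b t0 n e).
Proof.
  intro hb.
  assert (htail : forall i, (S n < i)%nat -> splice a b n e i = b i).
  { intros i hi. unfold splice.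
    destruct (Nat.leb_spec i n); [lia|]. destruct (Nat.eqb_spec i (S n)); [lia|].
    reflexivity. }
  assert (hpre : digit_sum (splice a b n e) n = digit_sum a n).
  { apply digit_sum_prefix. intros i hi. unfold splice.
    destruct (Nat.leb_spec i n); [reflexivity | lia]. }
  assert (hlast : splice a b n e (S n) = e).
  { unfold splice. destruct (Nat.leb_spec (S n) n); [lia|]. now rewrite Nat.eqb_refl. }
  unfold spliced_value.
  replace (t0 - digit_sum b (S n) + digit_sum a n + INR e / INR d ^ S n)
    with (t0 - digit_sum b (S n) + digit_sum (splice a b n e) (S n))
    by (simpl; rewrite hpre, hlast; ring).
  exact (expansion_change_prefix _ b t0 (S n) htail hb).
Qed.

Lemma spliced_value_inj (a b : nat -> nat) (t0 : R) (n e1 e2 : nat) :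
  e1 <> e2 -> spliced_value a b t0 n e1 <> spliced_value a b t0 n e2.
Proof.
  intros hne heq. apply hne, INR_eq. unfold spliced_value in heq.
  pose proof (base_pow_pos (S n)).
  apply (Rmult_eq_reg_r (/ INR d ^ S n)); [unfold Rdiv in heq; lra|].
  apply Rinv_neq_0_compat. lra.
Qed.

Lemma spliced_value_offset (a b : nat -> nat) (t0 : R) (n e : nat) :
  exists N : Z, spliced_value a b t0 n e - t0 = IZR N / INR (d ^ S n).
Proof.
  exists (Z.of_nat (digit_num a n * d + e) - Z.of_nat (digit_num b (S n)))%Z.
  pose proof base_ge_2. pose proof (base_pow_pos n).
  unfold spliced_value. rewrite pow_INR, minus_IZR, <- !INR_IZR_INZ, plus_INR, mult_INR.
  rewrite !digit_sum_num. simpl. field. lra.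
Qed.

Variable E : list nat.
Hypothesis hEd : forall e, In e E -> (e < d)%nat.

Definition digits_in_E (a : nat -> nat) : Prop := forall i, (1 <= i)%nat -> In (a i) E.

Lemma digits_in_E_lt (a : nat -> nat) :
  digits_in_E a -> forall i, (1 <= i)%nat -> (a i < d)%nat.
Proof. intros ha i hi. apply hEd, ha, hi. Qed.

Lemma spliced_value_in_J (a b : nat -> nat) (t t0 : R) (n e : nat) :
  digits_in_E a -> base_d_expansion d a t ->
  digits_in_E b -> base_d_expansion d b t0 -> In e E ->
  Jset d E (spliced_value a b t0 n e) /\
  Rabs (t - spliced_value a b t0 n e) <= / INR d ^ n.
Proof.
  intros ha hta hb htb he.
  assert (hc : digits_in_E (splice a b n e)).
  { intros i hi. unfold splice.
    destruct (i <=? n)%nat; [auto|]. destruct (i =? S n)%nat; auto. }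
  pose proof (splice_expansion a b t0 n e htb) as hexp.
  pose proof (digits_in_E_lt _ hc) as hclt.
  pose proof (expansion_bracket _ _ 0 hclt hexp) as h0. simpl in h0.
  pose proof (expansion_bracket _ _ n hclt hexp) as h1.
  pose proof (expansion_bracket a t n (digits_in_E_lt _ ha) hta) as h2.
  assert (hpre : digit_sum (splice a b n e) n = digit_sum a n).
  { apply digit_sum_prefix. intros i hi. unfold splice.
    destruct (Nat.leb_spec i n); [reflexivity | lia]. }
  split.
  - split; [lra|]. exists (splice a b n e). split; assumption.
  - rewrite hpre in h1. apply Rabs_le. lra.
Qed.

Variables (x t0 : R) (b : nat -> nat) (p0 : Z) (q0 : nat).
Hypotheses (hb : digits_in_E b) (htb : base_d_expansion d b t0)
  (hq0 : (1 <= q0)%nat) (hbase : t0 - x = IZR p0 / INR q0).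

Lemma spliced_value_rational (a : nat -> nat) (n e : nat) :
  exists p q, (1 <= q)%nat /\ (q <= q0 * d ^ S n)%nat /\
    Z.gcd p (Z.of_nat q) = 1%Z /\ IZR p / INR q = spliced_value a b t0 n e - x.
Proof.
  destruct (spliced_value_offset a b t0 n e) as [N hN].
  assert (hDn : (1 <= d ^ S n)%nat) by (apply Nat.neq_0_lt_0, Nat.pow_nonzero; lia).
  destruct (reduce_fraction (p0 * Z.of_nat (d ^ S n) + N * Z.of_nat q0) (q0 * d ^ S n)
              ltac:(nia)) as (p & q & hq1 & hqle & hg & heq).
  exists p, q. repeat split; auto.
  rewrite <- heq.
  replace (spliced_value a b t0 n e - x) with ((t0 - x) + (spliced_value a b t0 n e - t0))
    by ring.
  rewrite hbase, hN, plus_IZR, !mult_IZR, <- !INR_IZR_INZ, mult_INR.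
  assert (INR q0 <> 0) by (apply not_0_INR; lia).
  assert (INR (d ^ S n) <> 0) by (apply not_0_INR; lia).
  field. auto.
Qed.

Lemma rational_neighbour (a : nat -> nat) (t : R) (n : nat) (z : R) :
  NoDup E -> (1 < length E)%nat ->
  digits_in_E a -> base_d_expansion d a t ->
  exists p q, (1 <= q)%nat /\ Z.gcd p (Z.of_nat q) = 1%Z /\
    Jshift d E x (IZR p / INR q) /\ IZR p / INR q <> z /\
    Rabs ((t - x) - IZR p / INR q) <= / INR d ^ n /\
    Rabs ((t - x) - IZR p / INR q) <= INR d * INR q0 / INR q.
Proof.
  intros hnd hlen ha hta.
  destruct (two_distinct_members E hnd hlen) as (e1 & e2 & he1 & he2 & hne).
  assert (he : exists e, In e E /\ spliced_value a b t0 n e - x <> z).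
  { destruct (Req_dec (spliced_value a b t0 n e1 - x) z) as [h1|h1].
    - exists e2. split; [exact he2|]. intro h2.
      apply (spliced_value_inj a b t0 n e1 e2 hne). lra.
    - exists e1. auto. }
  destruct he as (e & he & hez).
  destruct (spliced_value_in_J a b t t0 n e ha hta hb htb he) as [hJ hclose].
  destruct (spliced_value_rational a n e) as (p & q & hq1 & hqle & hg & hpq).
  assert (hdist : Rabs ((t - x) - IZR p / INR q) <= / INR d ^ n).
  { rewrite hpq. replace (t - x - (spliced_value a b t0 n e - x))
      with (t - spliced_value a b t0 n e) by ring. exact hclose. }
  exists p, q. repeat split; auto.
  - exists (spliced_value a b t0 n e). split; [exact hJ | exact hpq].
  - rewrite hpq. exact hez.
  - eapply Rle_trans; [exact hdist|].
    apply le_INR in hqle. rewrite mult_INR, pow_INR in hqle.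
    pose proof base_ge_2. pose proof (base_pow_pos n).
    assert (1 <= INR q) by (apply (le_INR 1); exact hq1).
    assert (1 <= INR q0) by (apply (le_INR 1); exact hq0).
    replace (/ INR d ^ n) with (INR d * INR q0 / (INR q0 * INR d ^ S n))
      by (simpl; field; lra).
    apply Rmult_le_compat_l; [apply Rmult_le_pos; lra|].
    apply Rinv_le_contravar; lra.
Qed.

End DigitExpansions.

Theorem lemma3p4 (d : nat) (E : list nat)
  (hd : (2 <= d)%nat) (hEnd : NoDup E) (hEd : forall e, In e E -> (e < d)%nat)
  (hE1 : (1 < length E)%nat) (hE2 : (length E < d)%nat)
  (x : R) (hx : exists r, is_rational r /\ Jshift d E x r) :
  rationals_dense_in (Jshift d E x) /\
  exists K : R, 0 < K /\
    forall y, Jshift d E x y ->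
      intrinsically_approximable (Jshift d E x) (fun _ => K) y.
Proof.
  destruct hx as (r & (p0 & q0 & hq0 & hr) & t0 & [_ (b & hb & htb)] & hrt).
  assert (hbase : t0 - x = IZR p0 / INR q0) by lra.
  pose proof (rational_neighbour d hd E hEd x t0 b p0 q0 hb htb hq0 hbase) as hnb.
  split.
  - intros y (t & [_ (a & ha & hta)] & ->) eps heps.
    destruct (base_pow_inv_small d hd eps heps) as [n hn].
    destruct (hnb a t n 0 hEnd hE1 ha hta) as (p & q & hq & _ & hJ & _ & hclose & _).
    exists (IZR p / INR q). split; [exists p, q; auto|]. split; [exact hJ | lra].
  - exists (INR d * INR q0). split.
    { apply Rmult_lt_0_compat; [pose proof (base_ge_2 d hd); lra | apply (lt_INR 0); lia]. }
    intros y hy. split; [exact hy|]. intro l.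
    destruct hy as (t & [_ (a & ha & hta)] & ->).
    destruct (finite_list_gap l (t - x)) as (del & hdel & hgap).
    destruct (base_pow_inv_small d hd del hdel) as [n hn].
    destruct (hnb a t n (t - x) hEnd hE1 ha hta)
      as (p & q & hq & hg & hJ & hne & hclose & hK).
    exists p, q. repeat split; auto.
    intro hin. specialize (hgap _ hin hne). lra.
Qed.
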